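(* Let $(f_m)_{m\in\mathbb{N}}$, $f_m(z)=\sum_{k=0}^\infty a_k^{(m)}z^k$, be a sequence of functions analytic in the unit disk with real coefficients $a_k^{(m)}\in\mathbb{R}$ for all $k\in\mathbb{N}_0$, $m\in\mathbb{N}$. For $m\in\mathbb{N}$ and $n\in\mathbb{N}_0$ let $s_n^{(m)}=\sum_{k=0}^n a_k^{(m)}$. Suppose that (i) there exist a constant $0<K<\infty$ and real numbers $\alpha_m$, $m\in\mathbb{N}$, such that $\lim_{t\to1^-}f_m(t)=\alpha_m$ and $|\alpha_m|<K$ for all $m$; (ii) $(f_m)$ converges uniformly on $[0,1]$ as $m\to\infty$ (where $f_m$ is extended to $t=1$ by $f_m(1)=\alpha_m$); (iii) there exists a constant $0<L<\infty$ such that $s_n^{(m)}-\alpha_m<L$ for every $m\in\mathbb{N}$, $n\in\mathbb{N}_0$. Then for every $\epsilon>0$ there exists $N(\epsilon)\in\mathbb{N}$ such that \[ \left|\alpha_m-\frac{1}{n+1}\sum_{k=0}^n(n+1-k)a_k^{(m)}\right|=\left|\alpha_m-\frac{1}{n+1}\sum_{k=0}^n s_k^{(m)}\right|<\epsilon \] whenever $m,n>N(\epsilon)$.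
   Context: $\mathbb{N}_0=\mathbb{N}\cup\{0\}$. *)

From Stdlib Require Import Reals.
From Coquelicot Require Import Coquelicot.
Open Scope R_scope.

Definition psum (a : nat -> R) (n : nat) : R := sum_f_R0 a n.

Definition fext (a : nat -> R) (alpha : R) (t : R) : R :=
  if Rlt_dec t 1 then PSeries a t else alpha.

From Stdlib Require Import Reals Lra Lia Factorial.
From Coquelicot Require Import Coquelicot.
Open Scope R_scope.

(* For fixed m put b_k = L + alpha_m - s_k, which is nonnegative by (iii).  Its
   Abel means (1 - s) sum_k b_k s^k equal L + alpha_m - f_m(s); by (i) and the
   uniform convergence (ii) they are within eta of L for s in [theta, 1) and all
   large m, with theta independent of m.  The Cesaro means of b_k are
   L + alpha_m - (1/(n+1)) sum_{k<=n} s_k, so it remains to prove the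
   Hardy-Littlewood Tauberian theorem for nonnegative sequences, with an
   index N that depends only on eta and theta, not on the sequence.

   This follows Karamata's method with the kernels q_M(y) = 1 - (1 - y)^M =
   sum_{i<M} y (1 - y)^i.  Abel means pass through each polynomial kernel P with
   weight int_0^1 P(y) dy / y, which is the harmonic number H_M for q_M.  At
   s = e^{-x/n} with x close to H_M ~ log M, the values q_M(s^k) are close to 1
   for k <= n (an upper bound for sum_{k<=n} b_k) and at most M s^k for k > n
   (a lower bound), which pins the Cesaro mean to L up to O(1/sqrt H_M). *)

Lemma exists_nat_gt (x : R) : exists n : nat, x < INR n.
Proof.
  destruct (nfloor_ex (Rabs x) (Rabs_pos x)) as [n [_ Hn]].
  exists (S n). rewrite S_INR. pose proof (Rle_abs x). lra.
Qed.

Lemma pow_unit_interval (s : R) (k : nat) : 0 <= s <= 1 -> 0 <= s ^ k <= 1.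
Proof.
  intros Hs. split; [apply pow_le; lra|].
  rewrite <- (pow1 k). apply pow_incr; lra.
Qed.

Lemma bernoulli_ineq (s : R) (n : nat) : 0 <= s <= 1 -> 1 - INR n * (1 - s) <= s ^ n.
Proof.
  intros Hs. induction n as [|n IH]; [simpl; lra|].
  rewrite S_INR. simpl pow. pose proof (pos_INR n).
  assert (s * (1 - INR n * (1 - s)) <= s * s ^ n) by (apply Rmult_le_compat_l; lra).
  assert (0 <= INR n * ((1 - s) * (1 - s))) by (apply Rmult_le_pos; nra).
  nra.
Qed.

Lemma geom_sum_bounds (s : R) (p : nat) : 0 <= s <= 1 ->
  1 <= sum_f_R0 (pow s) p <= INR p + 1 /\
  INR p + 1 - sum_f_R0 (pow s) p <= (INR p + 1) * (INR p + 1) * (1 - s).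
Proof.
  intros Hs. induction p as [|p [[G1 G2] G3]]; [simpl; lra|].
  rewrite tech5, S_INR. pose proof (pow_unit_interval s (S p) Hs).
  pose proof (bernoulli_ineq s (S p) Hs). rewrite S_INR in *. pose proof (pos_INR p).
  assert (0 <= (INR p + 1) * (1 - s)) by (apply Rmult_le_pos; lra).
  repeat split; nra.
Qed.

Lemma exp_pow (x : R) (n : nat) : exp x ^ n = exp (INR n * x).
Proof.
  induction n as [|n IH]; simpl pow.
  - rewrite Rmult_0_l, exp_0. reflexivity.
  - rewrite IH, S_INR, <- exp_plus. f_equal. ring.
Qed.

Lemma exp_le_compat (x y : R) : x <= y -> exp x <= exp y.
Proof. intros [Hlt| ->]; [apply Rlt_le, exp_increasing, Hlt|lra]. Qed.

Lemma exp_neg_le_inv (x : R) : 0 <= x -> exp (- x) <= / (1 + x).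
Proof.
  intros Hx. rewrite exp_Ropp.
  apply Rinv_le_contravar; [lra|apply exp_ineq1_le].
Qed.

Lemma one_sub_exp_neg_ge (x : R) : 0 <= x -> x / (1 + x) <= 1 - exp (- x).
Proof.
  intros Hx. pose proof (exp_neg_le_inv x Hx).
  replace (x / (1 + x)) with (1 - / (1 + x)) by (field; lra). lra.
Qed.

Lemma one_sub_exp_neg_le (x : R) : 1 - exp (- x) <= x.
Proof. pose proof (exp_ineq1_le (- x)). lra. Qed.

Lemma exp_neg_lt_1 (x : R) : 0 < x -> exp (- x) < 1.
Proof. intros Hx. rewrite <- exp_0. apply exp_increasing. lra. Qed.

Lemma exp_neg_div_bounds (x y : R) : 0 < x -> 0 < y -> 0 <= exp (- (x / y)) < 1.
Proof.
  intros Hx Hy. split; [apply Rlt_le, exp_pos|apply exp_neg_lt_1, Rdiv_lt_0_compat; lra].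
Qed.

Lemma pow_exp_neg_div (x y : R) (k : nat) : exp (- (x / y)) ^ k = exp (- (x * (INR k / y))).
Proof. rewrite exp_pow. f_equal. unfold Rdiv. ring. Qed.

Lemma le_exp_neg_div (x y th : R) :
  0 < y -> th < 1 -> x / (1 - th) <= y -> th <= exp (- (x / y)).
Proof.
  intros Hy Hth Hxy. pose proof (one_sub_exp_neg_le (x / y)).
  enough (x / y <= 1 - th) by lra.
  apply Rmult_le_reg_r with y; [lra|].
  apply Rmult_le_reg_r with (/ (1 - th)); [apply Rinv_0_lt_compat; lra|].
  replace (x / y * y * / (1 - th)) with (x / (1 - th)) by (field; lra).
  replace ((1 - th) * y * / (1 - th)) with y by (field; lra). exact Hxy.
Qed.

Lemma sum_f_R0_le_Series (c : nat -> R) (n : nat) :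
  (forall k, 0 <= c k) -> ex_series c -> sum_f_R0 c n <= Series c.
Proof.
  intros Hc Hex. rewrite (Series_incr_n c (S n)) by (lia || exact Hex). simpl pred.
  enough (0 <= Series (fun k => c (S n + k)%nat)) by lra.
  apply Rle_trans with (Series (fun k => 0 * c (S n + k)%nat)).
  { rewrite Series_scal_l. lra. }
  apply Series_le; [intros; rewrite Rmult_0_l; split; [lra|apply Hc]|].
  apply ex_series_incr_n, Hex.
Qed.

Lemma Series_nonneg (c : nat -> R) : (forall k, 0 <= c k) -> ex_series c -> 0 <= Series c.
Proof.
  intros Hc Hex. eapply Rle_trans; [|apply (sum_f_R0_le_Series c 0); auto]. apply Hc.
Qed.

Lemma sum_mul_le_Series (b f : nat -> R) (n : nat) (e : R) :
  (forall k, 0 <= b k) -> (forall k, 0 <= f k) -> (forall k, (k <= n)%nat -> e <= f k) ->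
  ex_series (fun k => b k * f k) -> sum_f_R0 b n * e <= Series (fun k => b k * f k).
Proof.
  intros Hb Hf He Hex.
  apply Rle_trans with (sum_f_R0 (fun k => b k * f k) n).
  - rewrite Rmult_comm, scal_sum. apply sum_Rle. intros k Hk.
    apply Rmult_le_compat_l; auto.
  - apply sum_f_R0_le_Series; auto. intros k; apply Rmult_le_pos; auto.
Qed.

Lemma Series_le_sum_add_tail (b f g : nat -> R) (n : nat) (C : R) :
  (forall k, 0 <= b k) -> 0 <= C -> (forall k, 0 <= g k) -> (forall k, 0 <= f k <= 1) ->
  (forall k, (n < k)%nat -> f k <= C * g k) ->
  ex_series (fun k => b k * f k) -> ex_series (fun k => b k * g k) ->
  Series (fun k => b k * f k) <= sum_f_R0 b n + C * Series (fun k => b k * g k).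
Proof.
  intros Hb HC Hg Hf Htail Exf Exg.
  rewrite (Series_incr_n _ (S n) ltac:(lia) Exf), (Series_incr_n _ (S n) ltac:(lia) Exg).
  simpl pred.
  assert (Hhead : sum_f_R0 (fun k => b k * f k) n <= sum_f_R0 b n).
  { apply sum_Rle. intros k _. pose proof (Hb k). pose proof (Hf k). nra. }
  assert (Hghead : 0 <= sum_f_R0 (fun k => b k * g k) n)
    by (apply cond_pos_sum; intros k; apply Rmult_le_pos; auto).
  assert (Htail' : Series (fun k => b (S n + k)%nat * f (S n + k)%nat)
                   <= C * Series (fun k => b (S n + k)%nat * g (S n + k)%nat)).
  { rewrite <- Series_scal_l. apply Series_le.
    - intros k. pose proof (Hb (S n + k)%nat). pose proof (Hf (S n + k)%nat).
      pose proof (Htail (S n + k)%nat ltac:(lia)). split; nra.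
    - exact (ex_series_scal_l C _ (proj1 (ex_series_incr_n _ (S n)) Exg)). }
  nra.
Qed.

Lemma is_series_pow_shifted_psum (a : nat -> R) (c s : R) :
  Rbar_le 1 (CV_radius a) -> 0 <= s < 1 ->
  is_series (fun k => (c - psum a k) * s ^ k) ((c - PSeries a s) / (1 - s)).
Proof.
  intros Hr Hs.
  assert (Hs1 : Rabs s < 1) by (rewrite Rabs_pos_eq; lra).
  assert (Hin : Rbar_lt (Rabs s) (CV_radius a)).
  { eapply Rbar_lt_le_trans; [|exact Hr]. exact Hs1. }
  assert (Ha := proj1 (is_pseries_R a s _) (PSeries_correct a s (CV_radius_inside a s Hin))).
  assert (Hg := is_series_geom s Hs1).
  assert (Hprod : is_series (fun n => s ^ n * psum a n) (PSeries a s * / (1 - s))).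
  { eapply is_series_ext; [|apply (is_series_mult _ _ _ _ Ha Hg)].
    - intros n. simpl. unfold psum. rewrite scal_sum. apply sum_eq. intros i Hi.
      rewrite Rmult_assoc, <- pow_add. do 2 f_equal. lia.
    - apply CV_disk_inside, Hin.
    - eapply ex_series_ext; [intros n; apply RPow_abs|].
      apply ex_series_geom. rewrite Rabs_Rabsolu. exact Hs1. }
  replace ((c - PSeries a s) / (1 - s))
    with (plus (scal c (/ (1 - s))) (scal (-1) (PSeries a s * / (1 - s))))
    by (unfold plus, scal; simpl; unfold mult; simpl; field; lra).
  eapply is_series_ext;
    [|exact (is_series_plus _ _ _ _ (is_series_scal_l c _ _ Hg) (is_series_scal_l (-1) _ _ Hprod))].
  intros n. unfold plus, scal; simpl; unfold mult; simpl. ring.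
Qed.

(** * Transfer of Abel means through polynomial kernels *)

Definition abel_close (L eta th : R) (b : nat -> R) : Prop :=
  (forall k, 0 <= b k) /\
  (forall s, 0 <= s < 1 -> ex_series (fun k => b k * s ^ k)) /\
  (forall s, th <= s < 1 -> Rabs ((1 - s) * Series (fun k => b k * s ^ k) - L) <= eta).

(* [abel_transfer L P I]: for [b] as in [abel_close], the Abel means are
   transferred through the kernel [P], with [I] playing the role of
   [int_0^1 P(y) dy / y], uniformly in [b] and in the threshold [th]. *)
Definition abel_transfer (L : R) (P : R -> R) (I : R) : Prop :=
  forall d, 0 < d -> exists eta, 0 < eta /\ forall th, th < 1 ->
    exists tc, 0 <= tc < 1 /\ forall b, abel_close L eta th b ->
      forall s, tc <= s < 1 ->
        ex_series (fun k => b k * P (s ^ k)) /\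
        Rabs ((1 - s) * Series (fun k => b k * P (s ^ k)) - L * I) <= d.

Lemma abel_close_le (L eta eta' th : R) (b : nat -> R) :
  eta <= eta' -> abel_close L eta th b -> abel_close L eta' th b.
Proof.
  intros He [Hb0 [Hb1 Hb2]]. split; [|split]; auto.
  intros s Hs. specialize (Hb2 s Hs). lra.
Qed.

Lemma abel_transfer_eq (L : R) (P Q : R -> R) (I J : R) :
  (forall y, 0 <= y <= 1 -> P y = Q y) -> I = J ->
  abel_transfer L P I -> abel_transfer L Q J.
Proof.
  intros HPQ <- HP d Hd. destruct (HP d Hd) as [eta [He H]].
  exists eta; split; auto. intros th Hth. destruct (H th Hth) as [tc [Htc H']].
  exists tc; split; auto. intros b Hb s Hs. destruct (H' b Hb s Hs) as [Hex Hle].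
  assert (E : forall k, b k * P (s ^ k) = b k * Q (s ^ k))
    by (intros k; rewrite HPQ; [reflexivity|apply pow_unit_interval; lra]).
  split; [exact (ex_series_ext _ _ E Hex)|]. rewrite <- (Series_ext _ _ E). exact Hle.
Qed.

Lemma abel_transfer_plus (L : R) (P Q : R -> R) (I J : R) :
  abel_transfer L P I -> abel_transfer L Q J ->
  abel_transfer L (fun y => P y + Q y) (I + J).
Proof.
  intros HP HQ d Hd.
  destruct (HP (d / 2)) as [e1 [He1 H1]]; [lra|].
  destruct (HQ (d / 2)) as [e2 [He2 H2]]; [lra|].
  exists (Rmin e1 e2); split; [apply Rmin_pos; auto|].
  intros th Hth. destruct (H1 th Hth) as [t1 [Ht1 H1']]. destruct (H2 th Hth) as [t2 [Ht2 H2']].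
  exists (Rmax t1 t2); split; [split; apply Rmax_case; lra|].
  intros b Hb s Hs. pose proof (Rmax_l t1 t2). pose proof (Rmax_r t1 t2).
  destruct (H1' b (abel_close_le _ _ _ _ _ (Rmin_l e1 e2) Hb) s) as [Ex1 A1]; [lra|].
  destruct (H2' b (abel_close_le _ _ _ _ _ (Rmin_r e1 e2) Hb) s) as [Ex2 A2]; [lra|].
  assert (E : forall k, b k * (P (s ^ k) + Q (s ^ k)) = b k * P (s ^ k) + b k * Q (s ^ k))
    by (intros; ring).
  split.
  - eapply ex_series_ext; [intros k; symmetry; apply E|]. exact (ex_series_plus _ _ Ex1 Ex2).
  - rewrite (Series_ext _ _ E), Series_plus by auto.
    match goal with |- Rabs (_ * (?X + ?Y) - _) <= _ =>
      replace ((1 - s) * (X + Y) - L * (I + J))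
        with (((1 - s) * X - L * I) + ((1 - s) * Y - L * J)) by ring end.
    eapply Rle_trans; [apply Rabs_triang|]. lra.
Qed.

Lemma abel_transfer_scal (L : R) (P : R -> R) (I c : R) :
  abel_transfer L P I -> abel_transfer L (fun y => c * P y) (c * I).
Proof.
  intros HP d Hd. pose proof (Rabs_pos c) as Hc.
  destruct (HP (d / (Rabs c + 1))) as [eta [He Heta]]; [apply Rdiv_lt_0_compat; lra|].
  exists eta; split; auto. intros th Hth. destruct (Heta th Hth) as [tc [Htc H']].
  exists tc; split; auto. intros b Hb s Hs. destruct (H' b Hb s Hs) as [Ex A].
  assert (E : forall k, b k * (c * P (s ^ k)) = c * (b k * P (s ^ k))) by (intros; ring).
  split.
  - eapply ex_series_ext; [intros k; symmetry; apply E|]. exact (ex_series_scal_l c _ Ex).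
  - rewrite (Series_ext _ _ E), Series_scal_l.
    match goal with |- Rabs (_ * (_ * ?X) - _) <= _ =>
      replace ((1 - s) * (c * X) - L * (c * I)) with (c * ((1 - s) * X - L * I)) by ring end.
    rewrite Rabs_mult.
    apply Rle_trans with (Rabs c * (d / (Rabs c + 1))); [apply Rmult_le_compat_l; auto|].
    apply Rle_trans with ((Rabs c + 1) * (d / (Rabs c + 1))); [|right; field; lra].
    apply Rmult_le_compat_r; [apply Rlt_le, Rdiv_lt_0_compat|]; lra.
Qed.

Lemma abel_mean_pow_estimate (A G L X s r d : R) :
  1 <= G <= A -> A - G <= A * A * (1 - s) -> (1 - s) * G = 1 - r ->
  Rabs ((1 - r) * X - L) <= d / 2 -> Rabs L * (A * A) * (1 - s) <= d / 2 ->
  Rabs ((1 - s) * X - L * / A) <= d.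
Proof.
  intros HG HAG Hsr Hr HL.
  replace ((1 - s) * X - L * / A) with (((1 - r) * X - L) / G + L * ((A - G) / (A * G)))
    by (rewrite <- Hsr; field; lra).
  eapply Rle_trans; [apply Rabs_triang|].
  assert (T1 : Rabs (((1 - r) * X - L) / G) <= d / 2).
  { unfold Rdiv. rewrite Rabs_mult, (Rabs_pos_eq (/ G)) by (apply Rlt_le, Rinv_0_lt_compat; lra).
    assert (/ G <= 1) by (rewrite <- Rinv_1; apply Rinv_le_contravar; lra).
    pose proof (Rabs_pos ((1 - r) * X - L)). nra. }
  assert (T2 : Rabs (L * ((A - G) / (A * G))) <= d / 2).
  { assert (Hq : 0 <= (A - G) / (A * G) <= A - G).
    { split; [apply Rdiv_le_0_compat; nra|].
      apply Rmult_le_reg_r with (A * G); [nra|]. unfold Rdiv.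
      rewrite Rmult_assoc, Rinv_l, Rmult_1_r by nra.
      assert (0 <= (A - G) * (A * G - 1)) by (apply Rmult_le_pos; nra). lra. }
    rewrite Rabs_mult, (Rabs_pos_eq _ (proj1 Hq)).
    pose proof (Rabs_pos L). nra. }
  lra.
Qed.

Lemma abel_transfer_pow (L : R) (p : nat) :
  abel_transfer L (fun y => y ^ S p) (/ INR (S p)).
Proof.
  intros d Hd. set (A := INR (S p)).
  assert (HA : 1 <= A) by (unfold A; rewrite S_INR; pose proof (pos_INR p); lra).
  pose proof (Rabs_pos L).
  exists (d / 2). split; [lra|]. intros th Hth.
  set (c := Rmin 1 (Rmin ((1 - th) / A) (d / (2 * (Rabs L + 1) * (A * A))))).
  assert (Hc : 0 < c <= 1).
  { split; [|apply Rmin_l]. unfold c.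
    repeat apply Rmin_pos; try lra; apply Rdiv_lt_0_compat; try lra.
    repeat apply Rmult_lt_0_compat; lra. }
  assert (HcA : A * c <= 1 - th).
  { apply Rle_trans with (A * ((1 - th) / A)); [|right; field; lra].
    apply Rmult_le_compat_l; [lra|]. unfold c. eapply Rle_trans; [apply Rmin_r|apply Rmin_l]. }
  assert (HcL : Rabs L * (A * A) * c <= d / 2).
  { apply Rle_trans with (Rabs L * (A * A) * (d / (2 * (Rabs L + 1) * (A * A)))).
    - apply Rmult_le_compat_l; [apply Rmult_le_pos; nra|].
      unfold c. eapply Rle_trans; [apply Rmin_r|apply Rmin_r].
    - apply Rle_trans with ((Rabs L + 1) * (A * A) * (d / (2 * (Rabs L + 1) * (A * A)))).
      + apply Rmult_le_compat_r; [apply Rlt_le, Rdiv_lt_0_compat|]; nra.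
      + right; field; nra. }
  exists (1 - c). split; [lra|].
  intros b [Hb0 [Hb1 Hb2]] s Hs.
  set (r := s ^ S p).
  assert (Hr : th <= r < 1).
  { pose proof (bernoulli_ineq s (S p) ltac:(lra)) as Hbern. fold A r in Hbern.
    split; [nra|apply pow_lt_1_compat; [lra|lia]]. }
  assert (E : forall k, b k * (s ^ k) ^ S p = b k * r ^ k)
    by (intros k; unfold r; rewrite <- !pow_mult, Nat.mul_comm; reflexivity).
  split; [eapply ex_series_ext; [intros k; symmetry; apply E|apply Hb1; split; [apply pow_le|]; lra]|].
  rewrite (Series_ext _ _ E).
  destruct (geom_sum_bounds s p ltac:(lra)) as [HG HAG]. rewrite <- S_INR in HG, HAG.
  apply (abel_mean_pow_estimate A (sum_f_R0 (pow s) p) _ _ s r); auto.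
  - pose proof (GP_finite s p) as Hgp. replace (p + 1)%nat with (S p) in Hgp by lia.
    change (sum_f_R0 (fun n => s ^ n) p) with (sum_f_R0 (pow s) p) in Hgp. fold r in Hgp. lra.
  - eapply Rle_trans; [|exact HcL]. apply Rmult_le_compat_l; [nra|lra].
Qed.

Definition beta_integral (p i : nat) : R :=
  INR (fact p) * INR (fact i) / INR (fact (S (p + i))).

Lemma abel_transfer_beta (L : R) (p i : nat) :
  abel_transfer L (fun y => y ^ S p * (1 - y) ^ i) (beta_integral p i).
Proof.
  revert p. induction i as [|i IH]; intros p.
  - apply (abel_transfer_eq L (fun y => y ^ S p) _ (/ INR (S p)));
      [intros; simpl; ring| |apply abel_transfer_pow].
    unfold beta_integral. rewrite Nat.add_0_r, (fact_simpl p), !mult_INR.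
    pose proof (INR_fact_neq_0 p). pose proof (not_0_INR (S p) (Nat.neq_succ_0 p)).
    simpl (INR (fact 0)). field. auto.
  - apply (abel_transfer_eq L
      (fun y => y ^ S p * (1 - y) ^ i + (-1) * (y ^ S (S p) * (1 - y) ^ i)) _
      (beta_integral p i + (-1) * beta_integral (S p) i));
      [intros; simpl; ring| |exact (abel_transfer_plus _ _ _ _ _ (IH p) (abel_transfer_scal _ _ _ _ (IH (S p))))].
    unfold beta_integral.
    replace (S p + i)%nat with (S (p + i)) by lia. replace (p + S i)%nat with (S (p + i)) by lia.
    rewrite (fact_simpl (S (p + i))), (fact_simpl p), (fact_simpl i), !mult_INR, !S_INR.
    pose proof (INR_fact_neq_0 p). pose proof (INR_fact_neq_0 i).
    pose proof (INR_fact_neq_0 (S (p + i))). pose proof (pos_INR p). pose proof (pos_INR i).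
    rewrite plus_INR. field. split; [auto|lra].
Qed.

Fixpoint harm (M : nat) : R :=
  match M with O => 0 | S M' => harm M' + / INR (S M') end.

Definition kernel (M : nat) (y : R) : R := 1 - (1 - y) ^ M.

Lemma abel_transfer_kernel (L : R) (M : nat) : abel_transfer L (kernel M) (harm M).
Proof.
  unfold kernel. induction M as [|M IH].
  - apply (abel_transfer_eq L (fun y => 0 * y ^ 1) _ (0 * / INR 1));
      [intros; simpl; ring|simpl; ring|apply abel_transfer_scal, abel_transfer_pow].
  - apply (abel_transfer_eq L (fun y => 1 - (1 - y) ^ M + y ^ 1 * (1 - y) ^ M) _
      (harm M + beta_integral 0 M));
      [intros; simpl; ring| |exact (abel_transfer_plus _ _ _ _ _ IH (abel_transfer_beta L 0 M))].
    unfold beta_integral. change (harm (S M)) with (harm M + / INR (S M)).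
    rewrite Nat.add_0_l, (fact_simpl M), !mult_INR.
    pose proof (INR_fact_neq_0 M). pose proof (not_0_INR (S M) (Nat.neq_succ_0 M)).
    simpl (INR (fact 0)). field. auto.
Qed.

(** * Harmonic numbers and the kernels [1 - (1 - y)^M] *)

Lemma harm_nonneg (M : nat) : 0 <= harm M.
Proof.
  induction M as [|M IH]; [simpl; lra|].
  change (harm (S M)) with (harm M + / INR (S M)).
  pose proof (Rinv_0_lt_compat _ (lt_0_INR (S M) (Nat.lt_0_succ M))). lra.
Qed.

Lemma harm_lower (M : nat) : INR M + 1 <= exp (harm M).
Proof.
  induction M as [|M IH]; [simpl; rewrite exp_0; lra|].
  change (harm (S M)) with (harm M + / INR (S M)). rewrite exp_plus, S_INR.
  pose proof (pos_INR M). pose proof (exp_ineq1_le (/ (INR M + 1))).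
  assert (0 < / (INR M + 1)) by (apply Rinv_0_lt_compat; lra).
  apply Rle_trans with ((INR M + 1) * (1 + / (INR M + 1))); [right; field; lra|].
  apply Rmult_le_compat; lra.
Qed.

Lemma harm_upper (M : nat) : (1 <= M)%nat -> exp (harm M - 1) <= INR M.
Proof.
  induction M as [|M IH]; intros HM; [lia|].
  destruct (Nat.eq_dec M 0) as [->|HM0].
  { simpl. replace (0 + / 1 - 1) with 0 by field. rewrite exp_0. lra. }
  specialize (IH ltac:(lia)).
  change (harm (S M)) with (harm M + / INR (S M)). rewrite S_INR.
  assert (Hm : 1 <= INR M) by (apply (le_INR 1); lia).
  (* [exp (1/(M+1)) <= (M+1)/M] is [1 - 1/(M+1) <= exp (-1/(M+1))] *)
  assert (Hstep : exp (/ (INR M + 1)) <= (INR M + 1) / INR M).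
  { rewrite <- (Rinv_inv (exp _)), <- exp_Ropp.
    replace ((INR M + 1) / INR M) with (/ (INR M / (INR M + 1))) by (field; lra).
    apply Rinv_le_contravar; [apply Rdiv_lt_0_compat; lra|].
    pose proof (exp_ineq1_le (- / (INR M + 1))).
    replace (INR M / (INR M + 1)) with (1 + - / (INR M + 1)) by (field; lra). lra. }
  replace (harm M + / (INR M + 1) - 1) with (harm M - 1 + / (INR M + 1)) by ring.
  rewrite exp_plus.
  apply Rle_trans with (INR M * ((INR M + 1) / INR M)); [|right; field; lra].
  apply Rmult_le_compat; auto; apply Rlt_le, exp_pos.
Qed.

Lemma harm_unbounded (y : R) : exists M : nat, y <= harm M.
Proof.
  destruct (exists_nat_gt (exp y)) as [M HM]. exists M.
  pose proof (harm_lower M). apply Rlt_le, exp_lt_inv. lra.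
Qed.

Lemma harm_scale_bounds (t : R) (M : nat) :
  0 < t <= 1/4 -> 1 <= t * t * harm M -> 4 <= t * harm M /\ (1 <= M)%nat.
Proof.
  intros Ht HtH. assert (H4 : 4 <= t * harm M) by nra. split; [exact H4|].
  destruct M; [simpl in H4; lra|lia].
Qed.

Lemma harm_tail_coeff (t : R) (M : nat) : 0 <= t ->
  INR M * exp (- ((1 + t) * harm M)) * (1 + t * harm M) <= 1.
Proof.
  intros Ht. pose proof (harm_nonneg M). assert (0 <= t * harm M) by nra.
  apply Rle_trans with (/ (1 + t * harm M) * (1 + t * harm M)); [|rewrite Rinv_l; lra].
  apply Rmult_le_compat_r; [lra|].
  eapply Rle_trans; [|apply exp_neg_le_inv; lra].
  apply Rle_trans with (exp (harm M) * exp (- ((1 + t) * harm M))).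
  - apply Rmult_le_compat_r; [apply Rlt_le, exp_pos|]. pose proof (harm_lower M). lra.
  - rewrite <- exp_plus. apply exp_le_compat. lra.
Qed.

Lemma kernel_unit_interval (M : nat) (y : R) : 0 <= y <= 1 -> 0 <= kernel M y <= 1.
Proof.
  intros Hy. unfold kernel. pose proof (pow_unit_interval (1 - y) M ltac:(lra)). lra.
Qed.

Lemma kernel_le_mul (M : nat) (y : R) : 0 <= y <= 1 -> kernel M y <= INR M * y.
Proof.
  intros Hy. unfold kernel. pose proof (bernoulli_ineq (1 - y) M ltac:(lra)). lra.
Qed.

Lemma kernel_ge (M : nat) (y z : R) :
  0 <= z <= y -> y <= 1 -> 1 - / (1 + INR M * z) <= kernel M y.
Proof.
  intros Hz Hy. unfold kernel. pose proof (pos_INR M).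
  enough ((1 - y) ^ M <= / (1 + INR M * z)) by lra.
  apply Rle_trans with ((1 - z) ^ M); [apply pow_incr; lra|].
  apply Rle_trans with (exp (- z) ^ M).
  - apply pow_incr. pose proof (exp_ineq1_le (- z)). lra.
  - rewrite exp_pow, <- Ropp_mult_distr_r. apply exp_neg_le_inv, Rmult_le_pos; lra.
Qed.

Lemma kernel_exp_head (M n k : nat) (x : R) : 0 < x -> (0 < n)%nat -> (k <= n)%nat ->
  1 - / (1 + INR M * exp (- x)) <= kernel M (exp (- (x / INR n)) ^ k).
Proof.
  intros Hx Hn Hk. apply lt_0_INR in Hn.
  pose proof (exp_neg_div_bounds x (INR n) Hx Hn).
  apply kernel_ge; [split; [apply Rlt_le, exp_pos|]|apply pow_unit_interval; lra].
  rewrite pow_exp_neg_div. apply exp_le_compat.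
  assert (INR k / INR n <= 1) by (apply (Rdiv_le_1 _ _ Hn), le_INR, Hk).
  nra.
Qed.

Lemma kernel_exp_tail (M n k : nat) (y : R) : 0 <= y -> (0 < n)%nat -> (n < k)%nat ->
  kernel M (exp (- ((y + 1) / INR n)) ^ k) <= INR M * exp (- y) * exp (- (1 / INR n)) ^ k.
Proof.
  intros Hy Hn Hk. apply lt_0_INR in Hn.
  pose proof (exp_neg_div_bounds (y + 1) (INR n) ltac:(lra) Hn).
  eapply Rle_trans; [apply kernel_le_mul, pow_unit_interval; lra|].
  rewrite Rmult_assoc. apply Rmult_le_compat_l; [apply pos_INR|].
  rewrite !pow_exp_neg_div, <- exp_plus. apply exp_le_compat.
  assert (1 <= INR k / INR n)
    by (apply Rle_div_r; [exact Hn|rewrite Rmult_1_l; apply le_INR; lia]).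
  nra.
Qed.

(** * A uniform Tauberian theorem for nonnegative sequences *)

Lemma cesaro_upper_arith (A L t H x n : R) :
  0 <= A -> 0 <= L -> 0 < t <= 1/4 -> 1 <= H -> (1 - 2 * t) * H <= x -> x <= t * n ->
  A * (1 - t) * x <= (L * H + t) * (n + x) ->
  A <= (n + 1) * (L + t * (5 + 16 * L)).
Proof.
  intros HA HL Ht HH Hx Hxn Hkey.
  assert (Hn : 0 <= n) by nra.
  assert (Hnx : n + x <= (1 + t) * (n + 1)) by nra.
  assert (Hlo : A * (1 - t) * ((1 - 2 * t) * H) <= A * (1 - t) * x)
    by (apply Rmult_le_compat_l; nra).
  assert (Hhi : (L * H + t) * (n + x) <= (L + t) * H * ((1 + t) * (n + 1))).
  { apply Rle_trans with ((L * H + t * H) * (n + x)); [apply Rmult_le_compat_r; nra|].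
    replace ((L + t) * H) with (L * H + t * H) by ring. apply Rmult_le_compat_l; nra. }
  assert (Hdiv : A * (1 - t) * (1 - 2 * t) <= (L + t) * (1 + t) * (n + 1)).
  { apply Rmult_le_reg_r with H; [lra|]. nra. }
  assert (Hpoly : (L + t) * (1 + t) <= (L + t * (5 + 16 * L)) * ((1 - t) * (1 - 2 * t))).
  { assert (0 <= L * t * t) by (apply Rmult_le_pos; nra).
    assert (L * t * t * t <= L * t * t / 4) by nra.
    assert (t * t * t <= t * t / 4) by nra.
    nra. }
  apply Rmult_le_reg_r with ((1 - t) * (1 - 2 * t)); [nra|]. nra.
Qed.

Lemma cesaro_lower_arith (A B C L t H n : R) :
  0 <= A -> 0 <= L -> 0 < t <= 1/4 -> 1 <= t * t * H -> 1 <= t * n ->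
  0 <= C -> C * (1 + t * H) <= 1 -> 0 <= B <= (L + 1) * (n + 1) ->
  n * (L * H - t) <= ((1 + t) * H + 1) * (A + C * B) ->
  (n + 1) * (L - t * (5 + 16 * L)) <= A.
Proof.
  intros HA HL Ht HH Hn HC HCt HB Hkey.
  destruct (Rle_lt_dec (L - t * (5 + 16 * L)) 0) as [Hneg|Hpos]; [nra|].
  assert (HtH : 4 <= t * H) by nra.
  assert (Hn0 : 0 < n) by nra.
  assert (Hx : (1 + t) * H + 1 <= (1 + 2 * t) * H) by nra.
  assert (HCt' : C <= t) by nra.
  assert (HCB : C * B <= t * (L + 1) * (n + 1)).
  { apply Rle_trans with (t * B); [apply Rmult_le_compat_r; lra|].
    rewrite Rmult_assoc. apply Rmult_le_compat_l; lra. }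
  assert (Hmain : n * (L - t) <= (1 + 2 * t) * (A + t * (L + 1) * (n + 1))).
  { apply Rmult_le_reg_r with H; [nra|].
    apply Rle_trans with (n * (L * H - t)); [nra|].
    apply Rle_trans with (((1 + t) * H + 1) * (A + C * B)); [exact Hkey|].
    apply Rle_trans with ((1 + 2 * t) * H * (A + t * (L + 1) * (n + 1))); [|nra].
    apply Rmult_le_compat; nra. }
  assert (Hn1 : (1 - t) * (n + 1) * (L - t) <= n * (L - t))
    by (apply Rmult_le_compat_r; nra).
  assert (Hpoly : (1 + 2 * t) * (L - t * (5 + 16 * L))
                  <= (1 - t) * (L - t) - (1 + 2 * t) * t * (L + 1)) by nra.
  apply Rmult_le_reg_l with (1 + 2 * t); [lra|].
  apply Rle_trans with ((n + 1) * ((1 - t) * (L - t) - (1 + 2 * t) * t * (L + 1))); [|nra].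
  rewrite <- Rmult_assoc, (Rmult_comm (1 + 2 * t)), Rmult_assoc.
  apply Rmult_le_compat_l; lra.
Qed.

Section KernelBounds.

Variables (L t : R) (M n : nat) (b : nat -> R).
Hypotheses (HL : 0 <= L) (Ht : 0 < t <= 1/4) (HtH : 1 <= t * t * harm M)
  (HnH : harm M <= t * INR n) (Hb : forall k, 0 <= b k).

Lemma cesaro_upper_of_kernel (x s : R) :
  (1 - 2 * t) * harm M <= x <= (1 - t) * harm M - 1 ->
  s = exp (- (x / INR n)) ->
  ex_series (fun k => b k * kernel M (s ^ k)) ->
  (1 - s) * Series (fun k => b k * kernel M (s ^ k)) <= L * harm M + t ->
  sum_f_R0 b n <= (INR n + 1) * (L + t * (5 + 16 * L)).
Proof.
  intros Hx Hs Hex Hser.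
  destruct (harm_scale_bounds t M Ht HtH) as [HtH4 HM1].
  assert (Hn : 0 < INR n) by nra. assert (Hn' : (0 < n)%nat) by (apply INR_lt; simpl; lra).
  assert (Hx0 : 0 < x) by nra.
  assert (Hs01 := exp_neg_div_bounds x (INR n) Hx0 Hn). rewrite <- Hs in Hs01.
  (* [M e^{-x} >= e^{H - 1 - x} >= e^{tH}] *)
  assert (HMx : 1 + t * harm M <= INR M * exp (- x)).
  { apply Rle_trans with (exp (harm M - 1) * exp (- x));
      [|apply Rmult_le_compat_r; [apply Rlt_le, exp_pos|apply harm_upper, HM1]].
    rewrite <- exp_plus. eapply Rle_trans; [apply exp_ineq1_le|apply exp_le_compat; lra]. }
  assert (Hker : forall k, (k <= n)%nat -> 1 - t <= kernel M (s ^ k)).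
  { intros k Hk. rewrite Hs. eapply Rle_trans; [|apply kernel_exp_head; auto].
    assert (/ (1 + INR M * exp (- x)) <= t); [|lra].
    apply Rle_trans with (/ (2 + t * harm M)); [apply Rinv_le_contravar; lra|].
    apply Rmult_le_reg_r with (2 + t * harm M); [lra|].
    rewrite Rinv_l by lra. nra. }
  assert (Hsum : sum_f_R0 b n * (1 - t) <= Series (fun k => b k * kernel M (s ^ k))).
  { apply sum_mul_le_Series; auto.
    intros k. apply kernel_unit_interval, pow_unit_interval. lra. }
  assert (Hs1 : x / (INR n + x) <= 1 - s).
  { rewrite Hs. replace (x / (INR n + x)) with (x / INR n / (1 + x / INR n)) by (field; lra).
    apply one_sub_exp_neg_ge, Rlt_le, Rdiv_lt_0_compat; lra. }
  assert (HA : 0 <= sum_f_R0 b n) by (apply cond_pos_sum, Hb).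
  apply (cesaro_upper_arith _ L t (harm M) x (INR n)); try lra.
  apply Rle_trans with (sum_f_R0 b n * (1 - t) * ((1 - s) * (INR n + x))).
  - apply Rmult_le_compat_l; [nra|].
    replace x with (x / (INR n + x) * (INR n + x)) at 1 by (field; lra).
    apply Rmult_le_compat_r; lra.
  - rewrite <- Rmult_assoc. apply Rmult_le_compat_r; [lra|]. nra.
Qed.

Lemma cesaro_lower_of_kernel (s r : R) :
  s = exp (- (((1 + t) * harm M + 1) / INR n)) -> r = exp (- (1 / INR n)) ->
  ex_series (fun k => b k * kernel M (s ^ k)) -> ex_series (fun k => b k * r ^ k) ->
  L * harm M - t <= (1 - s) * Series (fun k => b k * kernel M (s ^ k)) ->
  (1 - r) * Series (fun k => b k * r ^ k) <= L + 1 ->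
  (INR n + 1) * (L - t * (5 + 16 * L)) <= sum_f_R0 b n.
Proof.
  intros Hs Hr Exs Exr Hser Hserr.
  destruct (harm_scale_bounds t M Ht HtH) as [HtH4 HM1].
  assert (Htn : 1 <= t * INR n) by nra. assert (Hn : 0 < INR n) by nra. assert (Hn' : (0 < n)%nat) by (apply INR_lt; simpl; lra).
  assert (Hs01 := exp_neg_div_bounds ((1 + t) * harm M + 1) (INR n) ltac:(nra) Hn).
  assert (Hr01 := exp_neg_div_bounds 1 (INR n) ltac:(lra) Hn).
  rewrite <- Hs in Hs01. rewrite <- Hr in Hr01.
  set (C := INR M * exp (- ((1 + t) * harm M))).
  assert (HC0 : 0 <= C) by (apply Rmult_le_pos; [apply pos_INR|apply Rlt_le, exp_pos]).
  assert (HC := harm_tail_coeff t M ltac:(lra)). fold C in HC.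
  assert (Htail : forall k, (n < k)%nat -> kernel M (s ^ k) <= C * r ^ k)
    by (intros k Hk; rewrite Hs, Hr; apply kernel_exp_tail; auto; nra).
  assert (Hsplit := Series_le_sum_add_tail b (fun k => kernel M (s ^ k)) (pow r) n C Hb HC0
    (fun k => pow_le r k (proj1 Hr01))
    (fun k => kernel_unit_interval M _ (pow_unit_interval s k ltac:(lra))) Htail Exs Exr).
  set (B := Series (fun k => b k * r ^ k)) in *.
  assert (HB0 : 0 <= B)
    by (apply Series_nonneg; [intros k; apply Rmult_le_pos; [apply Hb|apply pow_le; lra]|exact Exr]).
  assert (HB : B <= (L + 1) * (INR n + 1)).
  { assert (Hr1 : 1 / (INR n + 1) <= 1 - r).
    { rewrite Hr. replace (1 / (INR n + 1)) with (1 / INR n / (1 + 1 / INR n)) by (field; lra).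
      apply one_sub_exp_neg_ge, Rlt_le, Rdiv_lt_0_compat; lra. }
    apply Rle_div_l in Hr1; [|lra]. nra. }
  assert (Hs1 : 1 - s <= ((1 + t) * harm M + 1) / INR n) by (rewrite Hs; apply one_sub_exp_neg_le).
  apply (cesaro_lower_arith _ B C L t (harm M) (INR n)); try lra;
    [apply cond_pos_sum, Hb|].
  apply Rmult_le_reg_r with (/ INR n); [apply Rinv_0_lt_compat; lra|].
  replace (INR n * (L * harm M - t) * / INR n) with (L * harm M - t) by (field; lra).
  eapply Rle_trans; [exact Hser|].
  replace (((1 + t) * harm M + 1) * (sum_f_R0 b n + C * B) * / INR n)
    with (((1 + t) * harm M + 1) / INR n * (sum_f_R0 b n + C * B)) by (field; lra).
  apply Rmult_le_compat; try lra.
  apply Series_nonneg; [|exact Exs].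
  intros k. apply Rmult_le_pos; [apply Hb|apply kernel_unit_interval, pow_unit_interval; lra].
Qed.

Lemma cesaro_close_of_kernel (th : R) :
  th < 1 -> ((1 + t) * harm M + 1) / (1 - th) <= INR n ->
  (forall s, th <= s < 1 -> ex_series (fun k => b k * kernel M (s ^ k)) /\
     Rabs ((1 - s) * Series (fun k => b k * kernel M (s ^ k)) - L * harm M) <= t) ->
  (forall s, th <= s < 1 -> ex_series (fun k => b k * s ^ k) /\
     (1 - s) * Series (fun k => b k * s ^ k) <= L + 1) ->
  Rabs (sum_f_R0 b n / INR (n + 1) - L) <= t * (5 + 16 * L).
Proof.
  intros Hth Hn Hker Habel.
  destruct (harm_scale_bounds t M Ht HtH) as [HtH4 _]. assert (Hn0 : 0 < INR n) by nra.
  assert (Hth_exp : forall y, 0 < y <= (1 + t) * harm M + 1 -> th <= exp (- (y / INR n)) < 1).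
  { intros y Hy. split; [|apply exp_neg_lt_1, Rdiv_lt_0_compat; lra].
    apply le_exp_neg_div; [lra|lra|]. eapply Rle_trans; [|exact Hn].
    apply Rmult_le_compat_r; [apply Rlt_le, Rinv_0_lt_compat|]; lra. }
  set (x := (1 - t) * harm M - 1).
  assert (Hx : (1 - 2 * t) * harm M <= x <= (1 - t) * harm M - 1) by (unfold x; nra).
  destruct (Hker (exp (- (x / INR n)))) as [Exs Hs]; [apply Hth_exp; unfold x; nra|].
  destruct (Hker (exp (- (((1 + t) * harm M + 1) / INR n)))) as [Exs' Hs'];
    [apply Hth_exp; nra|].
  destruct (Habel (exp (- (1 / INR n)))) as [Exr Hr]; [apply Hth_exp; nra|].
  apply Rabs_le_between' in Hs, Hs'.
  assert (Hupper := cesaro_upper_of_kernel x _ Hx eq_refl Exs (proj2 Hs)).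
  assert (Hlower := cesaro_lower_of_kernel _ _ eq_refl eq_refl Exs' Exr (proj1 Hs') Hr).
  rewrite plus_INR. simpl (INR 1). apply Rabs_le_between'.
  split; [apply Rle_div_r|apply Rle_div_l]; lra.
Qed.

End KernelBounds.

Theorem cesaro_of_abel_uniform (L : R) : 0 <= L -> forall eps, 0 < eps ->
  exists eta, 0 < eta /\ forall th, th < 1 -> exists N : nat,
    forall b, abel_close L eta th b -> forall n, (N <= n)%nat ->
      Rabs (sum_f_R0 b n / INR (n + 1) - L) < eps.
Proof.
  intros HL eps Heps.
  set (t := Rmin (1/4) (eps / (2 * (5 + 16 * L)))).
  assert (Ht : 0 < t <= 1/4).
  { split; [apply Rmin_pos; [lra|apply Rdiv_lt_0_compat; lra]|apply Rmin_l]. }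
  assert (Hteps : t * (5 + 16 * L) < eps).
  { apply Rle_lt_trans with (eps / (2 * (5 + 16 * L)) * (5 + 16 * L));
    [|replace (eps / (2 * (5 + 16 * L)) * (5 + 16 * L)) with (eps / 2) by (field; lra); lra].
    apply Rmult_le_compat_r; [lra|apply Rmin_r]. }
  destruct (harm_unbounded (/ (t * t))) as [M HM].
  assert (HtH : 1 <= t * t * harm M).
  { apply Rle_trans with (t * t * / (t * t)); [right; field; lra|]. nra. }
  destruct (abel_transfer_kernel L M t (proj1 Ht)) as [eta [Heta Htr]].
  exists (Rmin eta 1). split; [apply Rmin_pos; lra|].
  intros th Hth. destruct (Htr th Hth) as [tc [Htc Htc']].
  set (th' := Rmax tc th). assert (Hth' : th' < 1) by (unfold th'; apply Rmax_case; lra).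
  assert (Htc_th' : tc <= th') by apply Rmax_l. assert (Hth_th' : th <= th') by apply Rmax_r.
  destruct (harm_scale_bounds t M Ht HtH) as [HtH4 _].
  destruct (exists_nat_gt (((1 + t) * harm M + 1) / (1 - th') + harm M / t)) as [N HN].
  assert (Hpos1 : 0 < ((1 + t) * harm M + 1) / (1 - th')) by (apply Rdiv_lt_0_compat; nra).
  assert (Hpos2 : 0 < harm M / t) by (apply Rdiv_lt_0_compat; nra).
  exists N. intros b Hb n Hn. pose proof (le_INR _ _ Hn) as HnN.
  destruct (abel_close_le _ _ _ _ _ (Rmin_r eta 1) Hb) as [Hb0 [Hb1 Hb2]].
  assert (HnH : harm M <= t * INR n).
  { apply Rle_trans with (t * (harm M / t)); [right; field; lra|].
    apply Rmult_le_compat_l; lra. }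
  eapply Rle_lt_trans; [|exact Hteps].
  apply (cesaro_close_of_kernel L t M n b HL Ht HtH HnH Hb0 th'); [lra|lra| |].
  - intros s Hs. apply Htc'; [exact (abel_close_le _ _ _ _ _ (Rmin_l eta 1) Hb)|lra].
  - intros s Hs. split; [apply Hb1; lra|].
    assert (Hr := Hb2 s ltac:(lra)). apply Rabs_le_between' in Hr. lra.
Qed.

(** * Application to the sequence [f_m] *)

Lemma near_left_of_filterlim (f : R -> R) (l e : R) : 0 < e ->
  filterlim f (at_left 1) (locally l) ->
  exists th, 0 <= th < 1 /\ forall s, th <= s < 1 -> Rabs (f s - l) < e.
Proof.
  intros He Hf. destruct (proj1 (filterlim_locally f l) Hf (mkposreal e He)) as [d Hd].
  pose proof (cond_pos d). exists (Rmax 0 (1 - d / 2)).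
  split; [split; [apply Rmax_l|apply Rmax_case; lra]|].
  intros s Hs. pose proof (Rmax_r 0 (1 - d / 2)).
  apply (Hd s); [|lra]. change (Rabs (s - 1) < d). rewrite Rabs_left1; lra.
Qed.

Lemma abel_limits_uniform (a : nat -> nat -> R) (alpha : nat -> R) :
  (forall m, (0 < m)%nat -> filterlim (PSeries (a m)) (at_left 1) (locally (alpha m))) ->
  (exists g : R -> R, forall eps, 0 < eps ->
     exists M : nat, forall m, (M <= m)%nat -> (0 < m)%nat ->
       forall t, 0 <= t <= 1 -> Rabs (fext (a m) (alpha m) t - g t) < eps) ->
  forall eta, 0 < eta -> exists th M, 0 <= th < 1 /\
    forall m, (M <= m)%nat -> (0 < m)%nat ->
      forall s, th <= s < 1 -> Rabs (PSeries (a m) s - alpha m) <= eta.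
Proof.
  intros Hlim [g Hg] eta Heta.
  destruct (Hg (eta / 5)) as [M HM]; [lra|].
  assert (HM1 : (M <= Nat.max M 1)%nat) by lia. assert (HM0 : (0 < Nat.max M 1)%nat) by lia.
  destruct (near_left_of_filterlim _ _ (eta / 5) ltac:(lra) (Hlim _ HM0)) as [th [Hth Hnear]].
  exists th, M. split; [exact Hth|]. intros m Hm Hm0 s Hs.
  assert (Hfext_lt : forall c x, fext c x s = PSeries c s)
    by (intros; unfold fext; destruct (Rlt_dec s 1); [reflexivity|lra]).
  assert (Hfext_1 : forall c x, fext c x 1 = x)
    by (intros; unfold fext; destruct (Rlt_dec 1 1); [lra|reflexivity]).
  (* triangle inequality through [g s], [f_{m'} s], [alpha_{m'}] and [g 1], m' = max M 1 *)
  pose proof (HM m Hm Hm0 s ltac:(lra)) as H1. pose proof (HM _ HM1 HM0 s ltac:(lra)) as H2.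
  pose proof (HM m Hm Hm0 1 ltac:(lra)) as H3. pose proof (HM _ HM1 HM0 1 ltac:(lra)) as H4.
  pose proof (Hnear s Hs) as H5.
  rewrite !Hfext_lt in H1, H2. rewrite !Hfext_1 in H3, H4.
  apply Rabs_lt_between' in H1, H2, H3, H4, H5. apply Rabs_le_between'. lra.
Qed.

Lemma abel_close_shifted_psum (a : nat -> R) (alpha L eta th : R) :
  Rbar_le 1 (CV_radius a) -> 0 <= th -> (forall n, psum a n - alpha < L) ->
  (forall s, th <= s < 1 -> Rabs (PSeries a s - alpha) <= eta) ->
  abel_close L eta th (fun k => L + alpha - psum a k).
Proof.
  intros Hr Hth Hps Hnear. split; [|split].
  - intros k. specialize (Hps k). lra.
  - intros s Hs. eexists. exact (is_series_pow_shifted_psum a (L + alpha) s Hr Hs).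
  - intros s Hs.
    rewrite (is_series_unique _ _ (is_series_pow_shifted_psum a (L + alpha) s Hr ltac:(lra))).
    replace ((1 - s) * ((L + alpha - PSeries a s) / (1 - s)) - L) with (- (PSeries a s - alpha))
      by (field; lra).
    rewrite Rabs_Ropp. exact (Hnear s Hs).
Qed.

Lemma sum_weighted_eq_sum_psum (x : nat -> R) (n : nat) :
  sum_f_R0 (fun k => INR (n + 1 - k) * x k) n = sum_f_R0 (fun k => psum x k) n.
Proof.
  induction n as [|n IH]; [unfold psum; simpl; ring|].
  rewrite (tech5 (fun k => psum x k)), <- IH, tech5.
  replace (S n + 1 - S n)%nat with 1%nat by lia.
  rewrite (sum_eq (fun k => INR (S n + 1 - k) * x k) (fun k => INR (n + 1 - k) * x k + x k))
    by (intros i Hi; replace (S n + 1 - i)%nat with (S (n + 1 - i)) by lia; rewrite S_INR; ring).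
  rewrite sum_plus. unfold psum. rewrite (tech5 x n). simpl (INR 1). ring.
Qed.

Theorem lemma1 (a : nat -> nat -> R) (alpha : nat -> R) (K L : R) :
  (* f_m analytic in the unit disk: radius of convergence >= 1 *)
  (forall m, (0 < m)%nat -> Rbar_le (Finite 1) (CV_radius (a m))) ->
  (* (i) *)
  0 < K ->
  (forall m, (0 < m)%nat ->
     filterlim (PSeries (a m)) (at_left 1) (locally (alpha m))) ->
  (forall m, (0 < m)%nat -> Rabs (alpha m) < K) ->
  (* (ii) uniform convergence on [0,1] of the extended f_m *)
  (exists g : R -> R, forall eps, 0 < eps ->
     exists M : nat, forall m, (M <= m)%nat -> (0 < m)%nat ->
       forall t, 0 <= t <= 1 -> Rabs (fext (a m) (alpha m) t - g t) < eps) ->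
  (* (iii) *)
  0 < L ->
  (forall m n, (0 < m)%nat -> psum (a m) n - alpha m < L) ->
  (* conclusion *)
  forall eps, 0 < eps ->
    exists N : nat, (0 < N)%nat /\
      forall m n, (N < m)%nat -> (N < n)%nat ->
        Rabs (alpha m - / INR (n + 1) *
                sum_f_R0 (fun k => INR (n + 1 - k) * a m k) n)
        = Rabs (alpha m - / INR (n + 1) * sum_f_R0 (fun k => psum (a m) k) n)
        /\
        Rabs (alpha m - / INR (n + 1) *
                sum_f_R0 (fun k => INR (n + 1 - k) * a m k) n) < eps.
Proof.
  intros Hrad _ Hlim _ Hunif HL Hbound eps Heps.
  destruct (cesaro_of_abel_uniform L (Rlt_le _ _ HL) eps Heps) as [eta [Heta Htauber]].
  destruct (abel_limits_uniform a alpha Hlim Hunif eta Heta) as [th [M [Hth Hnear]]].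
  destruct (Htauber th (proj2 Hth)) as [N0 HN0].
  exists (Nat.max (Nat.max M N0) 1). split; [lia|]. intros m n Hm Hn.
  rewrite sum_weighted_eq_sum_psum. split; [reflexivity|].
  assert (Hm0 : (0 < m)%nat) by lia.
  assert (Hcesaro := HN0 _ (abel_close_shifted_psum (a m) (alpha m) L eta th (Hrad m Hm0)
    (proj1 Hth) (fun k => Hbound m k Hm0) (Hnear m ltac:(lia) Hm0)) n ltac:(lia)).
  rewrite minus_sum, sum_cte, <- Nat.add_1_r in Hcesaro.
  assert (Hn1 : 0 < INR (n + 1)) by (apply lt_0_INR; lia).
  set (q := INR (n + 1)) in *.
  change (sum_f_R0 (fun k => psum (a m) k) n) with (sum_f_R0 (psum (a m)) n).
  replace (alpha m - / q * sum_f_R0 (psum (a m)) n)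
    with (((L + alpha m) * q - sum_f_R0 (psum (a m)) n) / q - L) by (field; lra).
  exact Hcesaro.
Qed.
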